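(* Let $U$ be a set with a total order $\preceq$, let $k>1$, and let $\mathcal P$ be a $k$-pattern in $U$ that admits at most one reconstruction from $\preceq$-consecutive points. Let $n$ be a positive integer, $r$ the remainder when $n$ is divided by $k-1$, $V$ an $n$-element subset of $U$, and $(V_1\prec\cdots\prec V_{k-1})$ a $\preceq$-orderly, balanced $(k-1)$-decomposition of $V$. Then $S_{\mathcal P}(V)=(n-r)(n+r-k+1)/(2k-2)$ if and only if for every $j\in\{1,\dots,k-1\}$ and every pair of points $v\prec w$ in $V_j$, there exists a reconstruction $P$ of $\mathcal P$ with $v$ and $w$ as its $j$th and $(j+1)$th points, and this $P$ is a subset of $V$ that is not of echelon $i$ in the decomposition for any $i\neq j$.
   Context: A pattern in $U$ is a collection $\mathcal P$ of finite subsets of $U$; it is a $k$-pattern if every instance has exactly $k$ elements. $S_{\mathcal P}(V)=|\{P\subseteq V:P\in\mathcal P\}|$. The $i$th point of a finite set w.r.t. $\preceq$ is the element with exactly $i-1$ elements of the set below it. For $j\in\{1,\dots,k-1\}$ and $u\prec v$, a reconstruction of $\mathcal P$ with $u,v$ as $j$th and $(j+1)$th points is an instance $P\in\mathcal P$ whose $j$th and $(j+1)$th points are $u,v$; $\mathcal P$ admits at most one reconstruction from $\preceq$-consecutive points if there is at most one such reconstruction for all such $j,u,v$. For $A,B\subseteq U$, $A\prec B$ means $a\prec b$ for all $a\in A,b\in B$. An $\ell$-decomposition of $V$ is a family $(V_1,\dots,V_\ell)$ of pairwise disjoint, possibly empty subsets with union $V$; it is $\preceq$-orderly if any two distinct members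 are $\prec$-comparable as sets (indexed so $V_1\prec\cdots\prec V_\ell$), and balanced if each $V_i$ has $\lfloor n/\ell\rfloor$ or $\lceil n/\ell\rceil$ elements. A $k$-subset $P=\{p_1\prec\cdots\prec p_k\}$ is of echelon $j$ in $(V_1\prec\cdots\prec V_{k-1})$ if $p_j,p_{j+1}\in V_j$. *)

From HB Require Import structures.
From mathcomp Require Import all_boot all_order all_algebra.
Set Implicit Arguments. Unset Strict Implicit. Unset Printing Implicit Defensive.
Import Order.TTheory GRing.Theory Num.Theory.

Local Open Scope order_scope.

Section Patterns.
Variables (disp : Order.disp_t) (U : orderType disp).

(* A finite subset of U is represented by the strictly increasing list of its
   elements (unique representation).  A pattern is a (boolean) collection of
   finite subsets, i.e. a predicate P on lists; only strictly sorted lists are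
   regarded as (finite sets that may be) instances. *)
Definition fset_rep (s : seq U) : bool := sorted <%O s.

Definition instance (P : pred (seq U)) (s : seq U) : bool := fset_rep s && P s.

Definition k_pattern (k : nat) (P : pred (seq U)) : Prop :=
  forall s, instance P s -> size s = k.

(* The i-th point of the finite set s (1-indexed in the paper) is
   onth s (i-1); we index points from 0 here: [point s i x] means that x is
   the (i+1)-th point of s. *)
Definition point (s : seq U) (i : nat) (x : U) : Prop := onth s i = Some x.

(* Reconstruction of P with u,v as j-th and (j+1)-th points; here j0 = j-1. *)
Definition reconstruction (P : pred (seq U)) (j0 : nat) (u v : U) (s : seq U)
  : Prop := instance P s /\ point s j0 u /\ point s j0.+1 v.

Definition at_most_one_reconstruction (k : nat) (P : pred (seq U)) : Prop :=
  forall (j0 : nat) (u v : U), j0 < k.-1 -> u < v ->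
    forall s t, reconstruction P j0 u v s -> reconstruction P j0 u v t -> s = t.

(* S_P(V): number of subsets of V (V strictly sorted) that are instances of P;
   subsets of V correspond bijectively to masks of V. *)
Definition S_P (P : pred (seq U)) (V : seq U) : nat :=
  \sum_(m : (size V).-tuple bool) instance P (mask m V).

Definition decomposition (l : nat) (V : seq U) (Vs : 'I_l -> seq U) : Prop :=
  (forall i, fset_rep (Vs i)) /\
  (forall i j : 'I_l, i != j -> forall x, x \in Vs i -> x \notin Vs j) /\
  (forall x, x \in V <-> exists i, x \in Vs i).

Definition orderly (l : nat) (Vs : 'I_l -> seq U) : Prop :=
  forall i j : 'I_l, (i < j)%N -> forall a b, a \in Vs i -> b \in Vs j -> a < b.

Definition balanced (l : nat) (n : nat) (Vs : 'I_l -> seq U) : Prop :=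
  forall i, size (Vs i) = (n %/ l)%N \/ size (Vs i) = ((n + l.-1) %/ l)%N.

(* s (a k-set p_1 < ... < p_k) is of echelon i (1-indexed i = i0+1) *)
Definition echelon (l : nat) (Vs : 'I_l -> seq U) (s : seq U) (i : 'I_l) : Prop :=
  exists x y, point s i x /\ point s i.+1 y /\ x \in Vs i /\ y \in Vs i.

End Patterns.

From HB Require Import structures.
From mathcomp Require Import all_boot all_order all_algebra.
From mathcomp Require Import zify ring.
Import Order.TTheory GRing.Theory Num.Theory.

Set Implicit Arguments.
Unset Strict Implicit.
Unset Printing Implicit Defensive.

(* Count the triples (j, v < w in V_j, an instance of P inside V having v, w as
   its j-th and (j+1)-th points).  An instance inside V has k points spread over
   the k-1 ordered blocks, so the block index of its t-th point is nondecreasing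
   in t and must meet the diagonal: two consecutive points share the block whose
   index is their position, i.e. the instance has an echelon.  Hence S_P(V) is
   at most the number of triples, which by unique reconstruction is at most the
   number of pairs v < w inside a block; for a balanced decomposition this is
   the closed form of the statement.  Equality holds throughout exactly when
   every such pair is reconstructed inside V and no instance inside V has a
   second echelon. *)

Lemma sum_nat_bool_le1 (T : finType) (b : pred T) :
  {in b &, forall x y, x = y} -> \sum_x b x <= 1.
Proof.
move=> b_eq; case: (pickP b) => [x bx|b0]; last by rewrite big1 // => x _; rewrite b0.
rewrite (bigD1 x) //= bx big1 // => y yx.
by case: (boolP (b y)) => // b_y; rewrite (b_eq y x) ?eqxx in yx.
Qed.

Lemma eq_sum_leq_in (I : eqType) (r : seq I) (F G : I -> nat) :
  {in r, forall i, F i <= G i} -> \sum_(i <- r) F i = \sum_(i <- r) G i ->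
  {in r, forall i, F i = G i}.
Proof.
move=> leFG eqFG i ri; apply/eqP; rewrite eqn_leq leFG //=.
have : \sum_(i <- r) (G i - F i) == 0.
  by rewrite big_seq_cond sumnB -?big_seq_cond ?eqFG ?subnn // => j /andP[/leFG].
by rewrite sum_nat_seq_eq0 => /allP/(_ i ri); rewrite subn_eq0.
Qed.

Lemma sum_eq_Some (T : eqType) (B : seq T) (o : option T) :
  uniq B -> \sum_(v <- B) (o == Some v) = oapp (fun x => x \in B) false o.
Proof.
move=> uB; case: o => [x|] /=; last by rewrite big1.
rewrite -(count_uniq_mem x uB) -sum1_count [RHS]big_mkcond /=.
by apply: eq_bigr => v _; rewrite (inj_eq Some_inj) eq_sym; case: (v == x).
Qed.

Lemma mask_inj (T : eqType) (V : seq T) (m1 m2 : seq bool) : uniq V ->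
  size m1 = size V -> size m2 = size V -> mask m1 V = mask m2 V -> m1 = m2.
Proof.
elim: V m1 m2 => [|a V IH] [|b1 m1] [|b2 m2] //= /andP[aV uV] [s1] [s2].
have a_notin m : a \in mask m V = false by apply: contraNF aV => /mem_mask.
case: b1; case: b2 => /= E.
- by case: E => /(IH _ _ uV s1 s2) ->.
- by move: (mem_head a (mask m1 V)); rewrite E a_notin.
- by move: (mem_head a (mask m2 V)); rewrite -E a_notin.
- by rewrite (IH _ _ uV s1 s2 E).
Qed.

Lemma onth_sorted (T : Type) (r : rel T) (s : seq T) t x y : sorted r s ->
  onth s t = Some x -> onth s t.+1 = Some y -> r x y.
Proof.
elim: s t => [|a s IH] [|t] //=; last by move/path_sorted; apply: IH.
by case: s {IH} => [|b s] //= /andP[rab _] [<-] [<-].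
Qed.

Lemma nondecreasing_stall (l : nat) (b : nat -> nat) :
  (forall t, t < l -> b t <= b t.+1) -> b l < l ->
  exists2 t, t < l & b t = t /\ b t.+1 = t.
Proof.
elim: l => [//|l IH] b_homo bl_lt.
have [b_lt|b_ge] := ltnP (b l) l.
  by have [|t tl ?] := IH _ b_lt; [move=> t tl; apply: b_homo; lia | exists t; lia].
by exists l => //; have := b_homo l (ltnSn l); lia.
Qed.

Lemma sorted_subset_mask (T : eqType) (r : rel T) (s V : seq T) :
  transitive r -> irreflexive r -> sorted r s -> sorted r V -> {subset s <= V} ->
  exists m : (size V).-tuple bool, s = mask m V.
Proof.
move=> r_tr r_irr s_sorted V_sorted sV.
have /subseqP[m m_size ->] : subseq s V.
  suff -> : s = filter (mem s) V by apply: filter_subseq.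
  apply: (irr_sorted_eq r_tr r_irr) => //; first exact: sorted_filter.
  by move=> x; rewrite mem_filter andb_idr //; apply: sV.
by exists (Tuple (introT eqP m_size)).
Qed.

Section Echelons.
Context {disp : Order.disp_t} {U : orderType disp}.

Definition consec (s : seq U) (j : nat) (v w : U) : bool :=
  (onth s j == Some v) && (onth s j.+1 == Some w).

Lemma consecP s j v w : reflect (point s j v /\ point s j.+1 w) (consec s j v w).
Proof. by apply: (iffP andP) => [[/eqP ? /eqP ?]|[-> ->]]. Qed.

Definition echelonb l (Vs : 'I_l -> seq U) (s : seq U) (i : 'I_l) : bool :=
  oapp (fun x => x \in Vs i) false (onth s i) &&
  oapp (fun x => x \in Vs i) false (onth s i.+1).

Definition echelon_count l (Vs : 'I_l -> seq U) (s : seq U) : nat :=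
  \sum_i echelonb Vs s i.

Lemma echelonP l (Vs : 'I_l -> seq U) s i : reflect (echelon Vs s i) (echelonb Vs s i).
Proof.
rewrite /echelonb /echelon /point.
case: (onth s i) => [x|]; case: (onth s i.+1) => [y|] /=; last first.
- by constructor => -[? [? []]].
- by constructor => -[? [? []]].
- by rewrite andbF; constructor => -[? [? [_ []]]].
by apply: (iffP andP) => [[xi yi]|[_ [_ [[<-] [[<-] xy]]]]]; first exists x, y.
Qed.

Lemma echelon_count_ge2 l (Vs : 'I_l -> seq U) s i j : i != j ->
  echelonb Vs s i -> echelonb Vs s j -> 1 < echelon_count Vs s.
Proof.
move=> ij si sj; rewrite /echelon_count (bigD1 i) //= si (bigD1 j) 1?eq_sym //= sj.
by rewrite addnA.
Qed.

Lemma sum_consec_block l (Vs : 'I_l -> seq U) s i : uniq (Vs i) ->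
  \sum_(v <- Vs i) \sum_(w <- Vs i) consec s i v w = echelonb Vs s i.
Proof.
move=> uVi; rewrite /echelonb -mulnb -!(sum_eq_Some _ uVi) big_distrl.
by apply: eq_bigr => v _; rewrite big_distrr; apply: eq_bigr => w _;
  rewrite /consec; case: (_ == Some v); case: (_ == Some w).
Qed.

Lemma sum_sorted_pairs (s : seq U) : sorted <%O s ->
  \sum_(v <- s) \sum_(w <- s) ((v < w)%O : nat) = 'C(size s, 2).
Proof.
elim: s => [|a s IH] a_s /=; first by rewrite big_nil.
have /allP a_min := order_path_min (@lt_trans _ U) a_s.
rewrite !big_cons ltxx add0n binS bin1 addnC -IH ?(path_sorted a_s) //.
congr (_ + _); first by apply: eq_big_seq => v /a_min a_v; rewrite big_cons (lt_gtF a_v).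
by rewrite -[size s]sum1_size big_seq [RHS]big_seq; apply: eq_bigr => w /a_min->.
Qed.

Section Decomposition.
Variables (l : nat) (V : seq U) (Vs : 'I_l -> seq U).
Hypotheses (decV : decomposition V Vs) (ordV : orderly Vs).

Let blocks_sorted i : sorted <%O (Vs i) := proj1 decV i.
Let blocks_disjoint : forall (i j : 'I_l), i != j -> forall x, x \in Vs i -> x \notin Vs j :=
  proj1 (proj2 decV).
Let blocks_cover : forall x, x \in V <-> exists i, x \in Vs i := proj2 (proj2 decV).

Lemma sum_size_blocks : uniq V -> \sum_i size (Vs i) = size V.
Proof.
move=> uV; have size_block i : size (Vs i) = \sum_(x <- V) (x \in Vs i).
  transitivity (count (mem (Vs i)) V).
    rewrite -size_filter; apply/perm_size/uniq_perm.
    - exact: lt_sorted_uniq (blocks_sorted i).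
    - exact: filter_uniq.
    by move=> x; rewrite mem_filter andb_idr // => xi; apply/blocks_cover; exists i.
  by rewrite -sumn_count sumnE big_map.
rewrite (eq_bigr _ (fun i _ => size_block i)) exchange_big -sum1_size big_seq [RHS]big_seq.
apply: eq_bigr => x /blocks_cover[i xi]; rewrite (bigD1 i) //= xi big1 // => j ji.
by rewrite eq_sym in ji; rewrite (negPf (blocks_disjoint ji xi)).
Qed.

Lemma exists_echelon s : sorted <%O s -> size s = l.+1 -> {subset s <= V} ->
  exists i, echelonb Vs s i.
Proof.
move=> s_sorted s_size s_V.
pose blk x := if [pick i | x \in Vs i] is Some i then val i else l.
have blkE i x : x \in Vs i -> blk x = i.
  rewrite /blk; case: pickP => [j xj|/(_ i)->//] xi.
  by case: (eqVneq i j) => [->//|/blocks_disjoint/(_ x xi)]; rewrite xj.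
have blkP x : x \in s -> exists2 i : 'I_l, x \in Vs i & blk x = i.
  by move=> /s_V/blocks_cover[i xi]; exists i; rewrite ?(blkE i).
have onth_in t : t <= l -> exists2 x, onth s t = Some x & x \in s.
  move=> tl; case E: (onth s t) => [x|]; first by exists x => //; apply/onthP; exists t.
  by move: (onthNE s t); rewrite E s_size /= leqNgt ltnS tl.
pose b t := oapp blk l (onth s t).
have b_homo t : t < l -> b t <= b t.+1.
  move=> tl; have [x xt xs] := onth_in t (ltnW tl); have [y yt ys] := onth_in t.+1 tl.
  have [i xi bx] := blkP x xs; have [j yj b_y] := blkP y ys.
  rewrite /b xt yt /= bx b_y leqNgt; apply/negP => ji.
  by have := lt_trans (ordV ji yj xi) (onth_sorted s_sorted xt yt); rewrite ltxx.
have b_lt : b l < l.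
  by have [x xl /blkP[i _ bx]] := onth_in l (leqnn l); rewrite /b xl /= bx.
have [t tl [bt bt1]] := nondecreasing_stall b_homo b_lt.
have [x xt /blkP[i xi bx]] := onth_in t (ltnW tl).
have [y yt /blkP[j yj b_y]] := onth_in t.+1 tl.
have ti : i = Ordinal tl by apply: val_inj; rewrite /= -bx -bt /b xt.
have tj : j = Ordinal tl by apply: val_inj; rewrite /= -b_y -bt1 /b yt.
by exists (Ordinal tl); rewrite /echelonb xt yt /= -ti xi ti -tj yj.
Qed.

Definition block_pair_sum (F : 'I_l -> U -> U -> nat) : nat :=
  \sum_i \sum_(v <- Vs i) \sum_(w <- Vs i) F i v w.

Lemma leq_block_pair_sum (F G : 'I_l -> U -> U -> nat) :
  (forall i v w, v \in Vs i -> w \in Vs i -> F i v w <= G i v w) ->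
  block_pair_sum F <= block_pair_sum G.
Proof.
move=> leFG; apply: leq_sum => i _; rewrite big_seq_cond [leqRHS]big_seq_cond.
apply: leq_sum => v /andP[vi _]; rewrite big_seq_cond [leqRHS]big_seq_cond.
by apply: leq_sum => w /andP[wi _]; apply: leFG.
Qed.

Lemma eq_block_pair_sum_leq (F G : 'I_l -> U -> U -> nat) :
  (forall i v w, v \in Vs i -> w \in Vs i -> F i v w <= G i v w) ->
  block_pair_sum F = block_pair_sum G ->
  forall i v w, v \in Vs i -> w \in Vs i -> F i v w = G i v w.
Proof.
move=> leFG eqFG i v w vi wi.
have leF2 i' v' : v' \in Vs i' -> \sum_(w' <- Vs i') F i' v' w' <= \sum_(w' <- Vs i') G i' v' w'.
  by move=> v'i; rewrite big_seq [leqRHS]big_seq; apply: leq_sum => w'; apply: leFG.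
have leF1 i' : \sum_(v' <- Vs i') \sum_(w' <- Vs i') F i' v' w' <=
               \sum_(v' <- Vs i') \sum_(w' <- Vs i') G i' v' w'.
  by rewrite big_seq [leqRHS]big_seq; apply: leq_sum => v'; apply: leF2.
have := eq_sum_leq_in (fun i' _ => leF1 i') eqFG (mem_index_enum i).
move=> /(eq_sum_leq_in (fun v' => leF2 i v'))/(_ v vi).
by move=> /(eq_sum_leq_in (fun w' => leFG i v w' vi))/(_ w wi).
Qed.

Lemma block_pair_sum_lt :
  block_pair_sum (fun _ v w => (v < w)%O : nat) = \sum_i 'C(size (Vs i), 2).
Proof.
by rewrite /block_pair_sum; apply: eq_bigr => i _; exact: sum_sorted_pairs (blocks_sorted i).
Qed.

Hypothesis sV : fset_rep V.

Section Pattern.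
Variable P : pred (seq U).
Hypotheses (kpat : k_pattern l.+1 P) (amo : at_most_one_reconstruction l.+1 P).

Definition rec_count (j : 'I_l) (v w : U) : nat :=
  \sum_(m : (size V).-tuple bool) (instance P (mask m V) && consec (mask m V) j v w).

Lemma block_pair_sum_rec_count : block_pair_sum rec_count =
  \sum_(m : (size V).-tuple bool) instance P (mask m V) * echelon_count Vs (mask m V).
Proof.
pose c m i v w := instance P (mask m V) && consec (mask m V) i v w.
transitivity (\sum_(m : (size V).-tuple bool) \sum_i \sum_(v <- Vs i) \sum_(w <- Vs i) c m i v w).
  rewrite /block_pair_sum /rec_count.
  under eq_bigr => i _ do under eq_bigr => v _ do rewrite exchange_big.
  by under eq_bigr => i _ do rewrite exchange_big; rewrite exchange_big.
apply: eq_bigr => m _; rewrite /echelon_count big_distrr; apply: eq_bigr => i _.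
rewrite -sum_consec_block ?(lt_sorted_uniq (blocks_sorted i)) // big_distrr.
apply: eq_bigr => v _; rewrite big_distrr; apply: eq_bigr => w _.
by rewrite /c; case: (instance _ _); case: (consec _ _ _ _).
Qed.

Lemma rec_count_le j v w : rec_count j v w <= (v < w)%O.
Proof.
have [vw|wv] := boolP (v < w)%O; last first.
  rewrite leqn0 /rec_count big1 // => m _; case: andP => // -[m_inst /consecP[pv pw]].
  have /andP[m_sorted _] := m_inst.
  by rewrite (onth_sorted m_sorted pv pw) in wv.
apply: sum_nat_bool_le1 => m1 m2.
move=> /andP[m1_inst /consecP m1_consec] /andP[m2_inst /consecP m2_consec].
apply/val_inj/(mask_inj (lt_sorted_uniq sV)); rewrite ?size_tuple //.
by apply: (amo (ltn_ord j) vw); split.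
Qed.

Lemma instance_le_echelon_count (m : (size V).-tuple bool) :
  instance P (mask m V) <= instance P (mask m V) * echelon_count Vs (mask m V).
Proof.
case m_inst: (instance P (mask m V)) => //; rewrite mul1n lt0n sum_nat_eq0 negb_forall.
have /andP[m_sorted _] := m_inst.
have [i mi] := exists_echelon m_sorted (kpat m_inst) (fun x => @mem_mask _ x _ _).
by apply/existsP; exists i; rewrite mi.
Qed.

Lemma S_P_le_block_pair_sum : S_P P V <= block_pair_sum rec_count.
Proof.
rewrite block_pair_sum_rec_count; apply: leq_sum => m _.
exact: instance_le_echelon_count.
Qed.

Lemma block_pair_sum_rec_count_le :
  block_pair_sum rec_count <= block_pair_sum (fun _ v w => (v < w)%O : nat).
Proof. by apply: leq_block_pair_sum => i v w _ _; apply: rec_count_le. Qed.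

Lemma echelon_count_le1 s :
  (forall i, echelonb Vs s i -> forall j, j != i -> ~~ echelonb Vs s j) ->
  echelon_count Vs s <= 1.
Proof.
move=> unique_ech; apply: sum_nat_bool_le1 => i j si sj.
by apply/eqP; apply: contraTT sj; rewrite eq_sym; apply: unique_ech.
Qed.

Definition block_pairs_reconstructible : Prop :=
  forall (j : 'I_l) v w, v \in Vs j -> w \in Vs j -> (v < w)%O ->
    exists s, reconstruction P j v w s /\ {subset s <= V} /\
      (forall i, i != j -> ~ echelon Vs s i).

Lemma S_P_eq_sum_bin2_reconstructible :
  S_P P V = \sum_i 'C(size (Vs i), 2) -> block_pairs_reconstructible.
Proof.
rewrite -block_pair_sum_lt => S_eq_T j v w vj wj vw.
have S_le_R := S_P_le_block_pair_sum; have R_le_T := block_pair_sum_rec_count_le.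
have R_eq_T : block_pair_sum rec_count = block_pair_sum (fun _ v w => (v < w)%O : nat).
  by apply/eqP; rewrite eqn_leq R_le_T -S_eq_T S_le_R.
have S_eq_R : S_P P V = block_pair_sum rec_count.
  by apply/eqP; rewrite eqn_leq S_le_R S_eq_T R_le_T.
have := eq_block_pair_sum_leq (fun i v w _ _ => rec_count_le i v w) R_eq_T vj wj.
rewrite vw /rec_count.
case: (pickP (fun m : (size V).-tuple bool =>
  instance P (mask m V) && consec (mask m V) j v w)) => [m|none]; last first.
  by rewrite big1 // => m _; rewrite none.
case/andP=> m_inst /consecP[pv pw] _; exists (mask m V); split; first by split.
split=> [x /mem_mask //|i ij /echelonP mi].
have mj : echelonb Vs (mask m V) j by apply/echelonP; exists v, w.
move: S_eq_R; rewrite block_pair_sum_rec_count.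
move=> /(eq_sum_leq_in (fun m _ => instance_le_echelon_count m))/(_ m (mem_index_enum m)).
by rewrite m_inst mul1n => ec1; have := echelon_count_ge2 ij mi mj; rewrite -ec1.
Qed.

Lemma reconstructible_S_P_eq_sum_bin2 :
  block_pairs_reconstructible -> S_P P V = \sum_i 'C(size (Vs i), 2).
Proof.
move=> recP; rewrite -block_pair_sum_lt; apply/eqP.
rewrite eqn_leq (leq_trans S_P_le_block_pair_sum block_pair_sum_rec_count_le) /=.
apply: (@leq_trans (block_pair_sum rec_count)).
  apply: leq_block_pair_sum => i v w vi wi; case vw: (v < w)%O => //.
  have [s [[s_inst [pv pw]] [s_V _]]] := recP i v w vi wi vw.
  have /andP[s_sorted _] := s_inst.
  have [m sm] := sorted_subset_mask (@lt_trans _ U) (@ltxx _ U) s_sorted sV s_V.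
  have s_consec : consec s i v w by apply/consecP.
  by rewrite /rec_count (bigD1 m) //= -sm s_inst s_consec.
rewrite block_pair_sum_rec_count; apply: leq_sum => m _.
case m_inst: (instance P (mask m V)) => //; rewrite mul1n; apply: echelon_count_le1.
have /andP[m_sorted _] := m_inst.
move=> i /echelonP[x [y [pi [pi1 [xi yi]]]]] j ji.
have xy := onth_sorted m_sorted pi pi1.
have [s [[s_inst [ps ps1]] [_ s_single]]] := recP i x y xi yi xy.
rewrite (amo (ltn_ord i) xy (conj m_inst (conj pi pi1)) (conj s_inst (conj ps ps1))).
by apply/echelonP; apply: s_single.
Qed.

End Pattern.

End Decomposition.
End Echelons.

Lemma sum_bin2_balanced l n (f : 'I_l -> nat) : 0 < l -> \sum_i f i = n ->
  (forall i, f i = n %/ l \/ f i = (n + l.-1) %/ l) ->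
  \sum_i 'C(f i, 2) = l * 'C(n %/ l, 2) + n %/ l * (n %% l).
Proof.
move=> l_gt0 sum_f f_bal; set q := n %/ l.
have ceil_le : (n + l.-1) %/ l <= q.+1.
  rewrite {1}(divn_eq n l) -addnA divnMDl // -addn1 leq_add2l -ltnS ltn_divLR //.
  by have := ltn_pmod n l_gt0; lia.
pose e i := f i - q.
have e_le1 i : e i <= 1 by rewrite /e; case: (f_bal i) => ->; lia.
have f_eq i : f i = q + e i.
  by rewrite /e; case: (f_bal i) => ->; have := leq_div2r l (leq_addr l.-1 n); lia.
have sum_e : \sum_(i < l) e i = n %% l.
  have : n = l * q + \sum_(i < l) e i.
    by rewrite -sum_f (eq_bigr _ (fun i _ => f_eq i)) big_split /= sum_nat_const card_ord.
  by have := divn_eq n l; lia.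
rewrite (eq_bigr (fun i => 'C(q, 2) + e i * q)); last first.
  move=> i _; rewrite f_eq; have := e_le1 i.
  by case: (e i) => [|[|//]] _; rewrite ?addn0 ?addn1 ?binS ?bin1 //; lia.
rewrite big_split /= sum_nat_const card_ord -big_distrl -sum_e.
by congr (_ + _); apply: mulnC.
Qed.

Lemma balanced_pairs_closed_form (R : numFieldType) k n : 1 < k ->
  let l := k.-1 in let r := n %% l in
  ((l * 'C(n %/ l, 2) + n %/ l * r)%N%:R =
   (n%:R - r%:R) * (n%:R + r%:R - k%:R + 1) / (2 * k%:R - 2) :> R)%R.
Proof.
move=> k_gt1 l r; set q := n %/ l.
have kE : k = l.+1 by rewrite /l; lia.
have nE : n = (q * l + r)%N by apply: divn_eq.
have bin2E : ('C(q, 2)%:R * 2 = q%:R * (q%:R - 1) :> R)%R.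
  rewrite -natrM bin_ffact ffactnS ffactn1.
  by case: (q) => [|q']; rewrite ?mul0r // natrM -natr1 addrK.
have l_neq0 : (l%:R != 0 :> R)%R by rewrite pnatr_eq0 /l; lia.
rewrite nE kE -!natr1 !natrD !natrM.
have -> : ('C(q, 2)%:R = q%:R * (q%:R - 1) / 2 :> R)%R by rewrite -bin2E mulfK ?pnatr_eq0.
field.
have -> : (2 * (l%:R + 1) - 2 = 2 * l%:R :> R)%R by ring.
by apply: mulf_neq0; rewrite // pnatr_eq0.
Qed.

Theorem mainTheorem4 (disp : Order.disp_t) (U : orderType disp) (k : nat)
  (P : pred (seq U)) :
  (1 < k)%N ->
  k_pattern k P ->
  at_most_one_reconstruction k P ->
  forall (n : nat) (V : seq U) (Vs : 'I_k.-1 -> seq U),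
    (0 < n)%N ->
    fset_rep V -> size V = n ->
    decomposition V Vs -> orderly Vs -> balanced n Vs ->
    let r := (n %% k.-1)%N in
    ((S_P P V)%:Q = ((n%:Q - r%:Q) * (n%:Q + r%:Q - k%:Q + 1)) / (2 * k%:Q - 2))%R
    <->
    (forall (j : 'I_k.-1) (v w : U), v \in Vs j -> w \in Vs j -> (v < w)%O ->
       exists s, reconstruction P j v w s /\ {subset s <= V} /\
         (forall i : 'I_k.-1, i != j -> ~ echelon Vs s i)).
Proof.
move=> k_gt1 kpat amo n V Vs _ V_sorted V_size decV ordV balV r.
have kE : k = k.-1.+1 by rewrite prednK // ltnW.
rewrite kE in kpat amo.
have sizes : \sum_i size (Vs i) = n.
  by rewrite -V_size (sum_size_blocks decV) // lt_sorted_uniq.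
have pairs_eq : ((\sum_i 'C(size (Vs i), 2))%:Q =
    ((n%:Q - r%:Q) * (n%:Q + r%:Q - k%:Q + 1)) / (2 * k%:Q - 2))%R.
  by rewrite (sum_bin2_balanced _ sizes) //; [exact: balanced_pairs_closed_form | rewrite -ltnS -kE].
rewrite -pairs_eq; apply: (@iff_trans _ (S_P P V = \sum_i 'C(size (Vs i), 2))).
  by split=> [/intr_inj [] | ->].
split; first exact: S_P_eq_sum_bin2_reconstructible.
exact: reconstructible_S_P_eq_sum_bin2.
Qed.
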